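(* Let $n\ge1$ and let $\varphi\colon A\to B$ be a Frobenius $n$-homomorphism. Then $\psi_n(ab)=\psi_n(a)\psi_n(b)$ for all $a,b\in A$, where $\psi_n(a)$ is the coefficient of $z^n$ in $R_\varphi(a,z)$ (equivalently $\psi_n(a)=\frac1{n!}\Phi_n(a,\dots,a)$).
   Context: $\mathbb{K}=\mathbb{R}$ or $\mathbb{C}$; $A$ and $B$ are commutative associative unital $\mathbb{K}$-algebras. For a $\mathbb{K}$-linear map $\varphi\colon A\to B$ and $a\in A$, the characteristic function is $R_\varphi(a,z)=\exp\bigl(\varphi(\ln(1+az))\bigr)=1+\sum_{k\ge1}\psi_k(a)z^k\in B[[z]]$, with $\ln(1+az)=\sum_{k\ge1}(-1)^{k+1}a^kz^k/k$ and $\varphi$ applied coefficientwise. The Frobenius maps $\Phi_k\colon A^k\to B$ of $\varphi$ are defined by $\Phi_1=\varphi$ and $\Phi_{k+1}(a_1,\dots,a_{k+1})=\varphi(a_1)\Phi_k(a_2,\dots,a_{k+1})-\sum_{j=2}^{k+1}\Phi_k(a_2,\dots,a_{j-1},a_1a_j,a_{j+1},\dots,a_{k+1})$. A linear map $\varphi$ is a (Frobenius) $n$-homomorphism if $\varphi(1)=n\cdot1_B$ and $\Phi_k\equiv0$ for all $k\ge n+1$. *)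

From HB Require Import structures.
From mathcomp Require Import all_boot all_order all_algebra.
Set Implicit Arguments. Unset Strict Implicit. Unset Printing Implicit Defensive.
Import Order.TTheory GRing.Theory Num.Theory.
Local Open Scope ring_scope.

(* K : numFieldType covers R-like and C-like fields. *)

Section Frobenius.
Variables (K : numFieldType) (A B : comAlgType K) (phi : {linear A -> B}).

(* Formal power series over B, represented by their coefficient sequences. *)
Definition ps_mul (f g : nat -> B) : nat -> B :=
  fun k => \sum_(i < k.+1) f i * g (k - i)%N.

Definition ps_one : nat -> B := fun k => if k == 0%N then 1 else 0.

Fixpoint ps_pow (f : nat -> B) (m : nat) : nat -> B :=
  if m is m'.+1 then ps_mul f (ps_pow f m') else ps_one.

(* exp f = sum_m f^m / m!, for f with zero constant term; the k-th
   coefficient only involves the terms m <= k. *)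
Definition ps_exp (f : nat -> B) : nat -> B :=
  fun k => \sum_(m < k.+1) (m`!%:R : K)^-1 *: ps_pow f m k.

(* phi(ln(1 + a z)) = sum_{k>=1} phi((-1)^(k+1) a^k / k) z^k *)
Definition phi_log (a : A) : nat -> B :=
  fun k => if k == 0%N then 0
           else phi (((-1) ^+ k.+1 / (k%:R : K)) *: a ^+ k).

(* psi_k(a) = coefficient of z^k in R_phi(a,z) = exp(phi(ln(1+az))) *)
Definition psi (k : nat) (a : A) : B := ps_exp (phi_log a) k.

(* Frobenius maps: Phi k a = Phi_k(a 0, ..., a (k-1)); arguments beyond k-1
   are ignored.  Phi 0 is not used by the paper (set to 0). *)
Fixpoint Phi (k : nat) (a : nat -> A) : B :=
  match k with
  | 0 => 0
  | k'.+1 =>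
    match k' with
    | 0 => phi (a 0%N)
    | _ => phi (a 0%N) * Phi k' (fun i => a i.+1)
           - \sum_(j < k') Phi k' (fun i => if i == (j : nat)
                                           then a 0%N * a i.+1 else a i.+1)
    end
  end.

Definition frobenius_hom (n : nat) : Prop :=
  phi 1 = n%:R /\ forall k, (n.+1 <= k)%N -> forall a : nat -> A, Phi k a = 0.

End Frobenius.

From HB Require Import structures.
From mathcomp Require Import all_boot all_order all_algebra.
Import GRing.Theory Num.Theory.
Local Open Scope ring_scope.
Set Implicit Arguments. Unset Strict Implicit. Unset Printing Implicit Defensive.

(* Write n = m + 1 and Phin x := Phi_n(x_0, ..., x_m).  Expanding the vanishing
   Phi_{n+1}(w, x_0, ..., x_m) gives phi(w) Phin(x) = sum_j Phin(x with x_j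
   replaced by w x_j).  Summing Phin(x with y multiplied into the slots of S)
   over all k-subsets S of the slots, this identity yields the same Newton
   recursion as the one satisfied by psi_k(y), which comes from differentiating
   R = exp(phi(ln(1 + y z))).  Hence Phin(x_0 y, ..., x_m y) = psi_n(y) Phin(x)
   for all x, y.  Applying it twice to x = (1, ..., 1), where
   Phin(1, ..., 1) = n! is invertible, gives psi_n(ab) = psi_n(a) psi_n(b). *)

Section PowerSeries.
Variables (K : numFieldType) (B : comAlgType K).

Lemma ps_pow_eq0 (f : nat -> B) m i : f 0%N = 0 -> (i < m)%N -> ps_pow f m i = 0.
Proof.
move=> f0; elim: m i => [//|m IH] i lt_im /=.
rewrite /ps_mul big1 // => -[[|j] lt_ji] _ /=; first by rewrite f0 mul0r.
rewrite IH ?mulr0 //; case: i lt_im lt_ji => [|i] lt_im lt_ji //.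
by rewrite subSS (leq_ltn_trans (leq_subr _ _)).
Qed.

Lemma ps_exp_widen (f : nat -> B) N i : f 0%N = 0 -> (i < N)%N ->
  ps_exp f i = \sum_(m < N) (m`!%:R : K)^-1 *: ps_pow f m i.
Proof.
move=> f0 lt_iN; rewrite /ps_exp.
rewrite -!(big_mkord xpredT (fun m => (m`!%:R : K)^-1 *: ps_pow f m i)).
rewrite (big_cat_nat (leq0n i.+1) lt_iN) /= [X in _ = _ + X]big1_seq ?addr0 //.
move=> m /andP[_]; rewrite mem_index_iota => /andP[lt_im _].
by rewrite ps_pow_eq0 ?scaler0.
Qed.

Lemma ps_pow_coef (f : nat -> B) N m i : (i < N)%N ->
  ps_pow f m i = ((\poly_(j < N) f j) ^+ m)`_i.
Proof.
elim: m i => [|m IH] i lt_iN /=; first by rewrite coef1 /ps_one; case: (i == 0%N).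
rewrite exprS coefM /ps_mul; apply: eq_bigr => -[j lt_ji] _ /=.
rewrite coef_poly (leq_ltn_trans _ lt_iN) -1?ltnS // IH //.
by rewrite (leq_ltn_trans _ lt_iN) // leq_subr.
Qed.

Definition inv_fact (m : nat) : B := (m`!%:R : K)^-1 *: 1.

Lemma inv_factS m : inv_fact m.+1 *+ m.+1 = inv_fact m.
Proof.
rewrite /inv_fact scalerMnl; congr (_ *: _).
by rewrite factS natrM invfM -mulr_natr mulrC mulrA mulfV ?mul1r ?pnatr_eq0.
Qed.

Definition exp_trunc (p : {poly B}) M := \sum_(m < M) (inv_fact m)%:P * p ^+ m.

Lemma ps_exp_coef (f : nat -> B) N M i : f 0%N = 0 -> (i < M)%N -> (M <= N)%N ->
  ps_exp f i = (exp_trunc (\poly_(j < N) f j) M)`_i.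
Proof.
move=> f0 lt_iM le_MN; rewrite (ps_exp_widen f0 lt_iM) /exp_trunc coef_sum.
apply: eq_bigr => m _; rewrite coefCM -ps_pow_coef; last exact: leq_trans le_MN.
by rewrite /inv_fact -scalerAl mul1r.
Qed.

Lemma deriv_exp_trunc (p : {poly B}) M :
  (exp_trunc p M.+1)^`() = p^`() * exp_trunc p M.
Proof.
rewrite /exp_trunc raddf_sum big_ord_recl /= expr0 mulr1 derivC add0r mulr_sumr.
apply: eq_bigr => m _; rewrite /bump /= add1n derivM derivC mul0r add0r deriv_exp.
by rewrite /= mulrnAr mulrCA -mulrnAr -mulrnAl -polyCMn inv_factS.
Qed.

(* (exp f)' = f' exp f, read off on the coefficient of z^k. *)
Lemma ps_exp_newton (f : nat -> B) k : f 0%N = 0 ->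
  ps_exp f k.+1 *+ k.+1 = \sum_(j < k.+1) (f j.+1 *+ j.+1) * ps_exp f (k - j).
Proof.
move=> f0; rewrite (@ps_exp_coef _ k.+2 k.+2) // -coef_deriv deriv_exp_trunc coefM.
apply: eq_bigr => -[j lt_jk] _ /=.
rewrite coef_deriv coef_poly ltnS lt_jk (@ps_exp_coef _ k.+2 k.+1) //.
by rewrite ltnS leq_subr.
Qed.

End PowerSeries.

Section Frobenius.
Variables (K : numFieldType) (A B : comAlgType K) (phi : {linear A -> B}).

Lemma psi0 y : psi phi 0 y = 1.
Proof. by rewrite /psi /ps_exp big_ord1 /= /ps_one /= invr1 scale1r. Qed.

Lemma psi_newton y k : psi phi k.+1 y *+ k.+1 =
  \sum_(j < k.+1) ((-1) ^+ j *: phi (y ^+ j.+1)) * psi phi (k - j) y.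
Proof.
rewrite /psi ps_exp_newton //; apply: eq_bigr => j _; congr (_ * _).
rewrite /phi_log /= linearZ /= scalerMnl; congr (_ *: _).
rewrite -mulrnAr -[_^-1 *+ _]mulr_natr mulVf ?pnatr_eq0 // mulr1.
by rewrite !exprS !mulN1r opprK.
Qed.

Lemma PhiSS k a : Phi phi k.+2 a = phi (a 0%N) * Phi phi k.+1 (fun i => a i.+1)
  - \sum_(j < k.+1)
      Phi phi k.+1 (fun i => if i == (j : nat) then a 0%N * a i.+1 else a i.+1).
Proof. by []. Qed.

Lemma eq_Phi k a b : a =1 b -> Phi phi k a = Phi phi k b.
Proof.
elim: k a b => [//|[|k] IH] a b eq_ab; first by rewrite /= eq_ab.
rewrite !PhiSS eq_ab (IH _ (fun i => b i.+1)) //; congr (_ - _).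
by apply: eq_bigr => j _; apply: IH => i; rewrite !eq_ab.
Qed.

Lemma Phi_const1 m : phi 1 = m.+1%:R -> forall k, (k <= m)%N ->
  Phi phi k.+1 (fun _ => 1) = (m.+1 ^_ k.+1)%:R.
Proof.
move=> phi1; elim=> [|k IH] lt_km; first by rewrite /= ffactn1 phi1.
rewrite PhiSS IH ?(ltnW lt_km) //.
rewrite (eq_bigr (fun _ => (m.+1 ^_ k.+1)%:R)); last first.
  move=> j _; rewrite -IH ?(ltnW lt_km) //; apply: eq_Phi => i /=.
  by case: ifP; rewrite ?mulr1.
rewrite sumr_const card_ord phi1 [in RHS]ffactnSr natrM natrB; last exact: ltnW lt_km.
by rewrite mulrBr [_.+1%:R * _]mulrC [_ * k.+1%:R]mulr_natr.
Qed.

Variable m : nat.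
Hypothesis Phi_vanish : forall a, Phi phi m.+2 a = 0.

Definition Phin (x : nat -> A) := Phi phi m.+1 x.
Arguments Phin : simpl never.

Definition mul_args (x : nat -> A) (g : 'I_m.+1 -> A) : nat -> A :=
  fun l => if (l < m.+1)%N then x l * g (inord l) else x l.
Definition delta_at (j : 'I_m.+1) (w : A) l := if l == j then w else 1.
Definition fill_at (S : {set 'I_m.+1}) (w : A) l := if l \in S then w else 1.

Lemma mul_argsA x g1 g2 :
  mul_args (mul_args x g1) g2 =1 mul_args x (fun l => g1 l * g2 l).
Proof. by move=> l; rewrite /mul_args; case: ifP => lt_lm; rewrite ?lt_lm ?mulrA. Qed.

Lemma eq_mul_args x g1 g2 : g1 =1 g2 -> mul_args x g1 =1 mul_args x g2.
Proof. by move=> eq_g l; rewrite /mul_args eq_g. Qed.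

Lemma mul_args1 x : mul_args x (fun _ => 1) =1 x.
Proof. by move=> l; rewrite /mul_args; case: ifP; rewrite ?mulr1. Qed.

Lemma phi_mul_Phin x g w : phi w * Phin (mul_args x g) =
  \sum_(j < m.+1) Phin (mul_args x (fun l => g l * delta_at j w l)).
Proof.
have /eqP := Phi_vanish (fun i => if i is i'.+1 then mul_args x g i' else w).
rewrite PhiSS subr_eq0 => /eqP ->; apply: eq_bigr => j _.
apply: eq_Phi => i /=; rewrite -mul_argsA /mul_args /delta_at.
case: ltnP => lt_im; last first.
  by rewrite (_ : (i == j) = false) //; apply: gtn_eqF; apply: leq_trans lt_im.
rewrite -(inj_eq val_inj) /= inordK //.
by case: (i == j); rewrite ?mulr1 // mulrC.
Qed.

Lemma big_card_setU1 (j : 'I_m.+1) k (G : {set 'I_m.+1} -> B) :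
  \sum_(S : {set 'I_m.+1} | (#|S| == k.+1) && (j \in S)) G S =
  \sum_(S : {set 'I_m.+1} | (#|S| == k) && (j \notin S)) G (j |: S).
Proof.
rewrite (reindex_onto (fun S => j |: S) (fun S => S :\ j)) /=; last first.
  by move=> S /andP[_ jS]; rewrite setD1K.
apply: eq_bigl => S; rewrite setU11 andbT cardsU1.
case jS: (j \in S) => /=; last by rewrite setU1K ?jS // eqxx !andbT add1n eqSS.
by rewrite andbF; apply/negbTE; rewrite negb_and; apply/orP; right;
  apply: contraTneq jS => <-; rewrite setD11.
Qed.

Section SymmetricSums.
Variables (x : nat -> A) (y : A).

Definition sym_sum k :=
  \sum_(S : {set 'I_m.+1} | #|S| == k) Phin (mul_args x (fill_at S y)).

Definition sym_sum_pow i k := \sum_(j < m.+1)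
  \sum_(S : {set 'I_m.+1} | (#|S| == k) && (j \notin S))
    Phin (mul_args x (fun l => if l == j then y ^+ i else fill_at S y l)).

(* In each product phi(y^i) Phin(.), the new factor y^i lands either on a slot
   outside S or on a slot of S, where it merges with y into y^(i+1). *)
Lemma phi_mul_sym_sum i k : phi (y ^+ i) * sym_sum k =
  sym_sum_pow i k + (if k is k'.+1 then sym_sum_pow i.+1 k' else 0).
Proof.
rewrite /sym_sum mulr_sumr.
under eq_bigr => S _ do rewrite phi_mul_Phin.
rewrite exchange_big /sym_sum_pow.
have outside (j : 'I_m.+1) (S : {set 'I_m.+1}) : j \notin S ->
    Phin (mul_args x (fun l => fill_at S y l * delta_at j (y ^+ i) l)) =
    Phin (mul_args x (fun l => if l == j then y ^+ i else fill_at S y l)).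
  move=> jS; apply: eq_Phi; apply: eq_mul_args => l; rewrite /fill_at /delta_at.
  by case: eqP => [->|_]; rewrite ?(negbTE jS) ?mul1r ?mulr1.
case: k => [|k]; rewrite ?addr0 -?big_split; apply: eq_bigr => j _;
  rewrite (bigID (fun S : {set 'I_m.+1} => j \in S)) /=.
  rewrite big1 ?add0r => [|S /andP[/eqP/cards0_eq -> ]]; last by rewrite in_set0.
  by apply: eq_bigr => S /andP[_ /outside].
rewrite addrC; congr (_ + _); first by apply: eq_bigr => S /andP[_ /outside].
rewrite big_card_setU1; apply: eq_bigr => S _; apply: eq_Phi.
apply: eq_mul_args => l; rewrite /fill_at /delta_at in_setU1.
by case: eqP => [->|_] /=; rewrite ?mulr1 ?exprS.
Qed.

Lemma sym_sum_pow1 k : sym_sum_pow 1 k = sym_sum k.+1 *+ k.+1.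
Proof.
have slot j : \sum_(S : {set 'I_m.+1} | (#|S| == k) && (j \notin S))
      Phin (mul_args x (fun l => if l == j then y ^+ 1 else fill_at S y l)) =
    \sum_(S : {set 'I_m.+1} | #|S| == k.+1)
      (if j \in S then Phin (mul_args x (fill_at S y)) else 0).
  rewrite -big_mkcondr big_card_setU1; apply: eq_bigr => S _.
  by apply: eq_Phi; apply: eq_mul_args => l; rewrite /fill_at in_setU1 expr1; case: eqP.
rewrite /sym_sum_pow (eq_bigr _ (fun j _ => slot j)) exchange_big /sym_sum -sumrMnl.
by apply: eq_bigr => S /eqP card_S; rewrite -big_mkcond sumr_const card_S.
Qed.

Lemma sym_sum_newton k : sym_sum k.+1 *+ k.+1 =
  \sum_(i < k.+1) (-1) ^+ i *: (phi (y ^+ i.+1) * sym_sum (k - i)%N).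
Proof.
rewrite -sym_sum_pow1.
pose t i := if (i <= k)%N then ((-1 : K) ^+ i) *: sym_sum_pow i.+1 (k - i)%N else 0.
rewrite -(big_mkord xpredT
  (fun i => (-1) ^+ i *: (phi (y ^+ i.+1) * sym_sum (k - i)%N))).
rewrite (@telescope_sumr_eq _ _ _ (fun i => - t i)) //.
  by rewrite /t ltnn oppr0 sub0r opprK expr0 scale1r subn0.
move=> i /andP[_ lt_ik]; rewrite opprK addrC phi_mul_sym_sum /t -ltnS lt_ik.
case: ltnP => le_ik.
  rewrite -(subnSK le_ik) exprS mulN1r scaleNr opprK scalerDr.
  by congr (_ + _); rewrite subnSK.
have -> : i = k by apply/eqP; rewrite eqn_leq le_ik -ltnS lt_ik.
by rewrite subnn addr0 subr0.
Qed.

Lemma sym_sum_psi k : sym_sum k = psi phi k y * Phin x.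
Proof.
elim/ltn_ind: k => -[|k] IH.
  rewrite psi0 mul1r /sym_sum (big_pred1 set0) => [|S]; last by rewrite /= cards_eq0.
  apply: eq_Phi => l; rewrite -[RHS]mul_args1.
  by apply: eq_mul_args => j; rewrite /fill_at in_set0.
have nz_k : (k.+1%:R : K) != 0 by rewrite pnatr_eq0.
apply: (scalerI nz_k); rewrite !scaler_nat sym_sum_newton -mulrnAl psi_newton mulr_suml.
apply: eq_bigr => -[i lt_ik] _ /=.
by rewrite IH ?ltnS ?leq_subr // mulrA !scalerAl.
Qed.

End SymmetricSums.

Lemma Phin_mul_const x y : Phin (mul_args x (fun _ => y)) = psi phi m.+1 y * Phin x.
Proof.
rewrite -sym_sum_psi /sym_sum (big_pred1 setT) => [|S]; last first.
  rewrite /= eqEcard subsetT cardsT card_ord eqn_leq.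
  by rewrite -[X in (_ <= X)%N]card_ord max_card.
by apply: eq_Phi; apply: eq_mul_args => l; rewrite /fill_at in_setT.
Qed.

Lemma psi_mul (phi1 : phi 1 = m.+1%:R) a b :
  psi phi m.+1 (a * b) = psi phi m.+1 a * psi phi m.+1 b.
Proof.
pose ones (_ : nat) : A := 1.
have Phin_ones : Phin ones = (m.+1)`!%:R.
  by rewrite /Phin (Phi_const1 phi1 (leqnn m)) ffactnn.
have mul_ab : Phin (mul_args (mul_args ones (fun _ => a)) (fun _ => b)) =
    Phin (mul_args ones (fun _ => a * b)) by apply: eq_Phi; apply: mul_argsA.
move: mul_ab; rewrite !Phin_mul_const Phin_ones.
rewrite mulrA [psi phi m.+1 b * _]mulrC -(scaler_nat (m.+1)`! (1 : B)) -!scalerAr !mulr1.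
by move/scalerI => -> //; rewrite pnatr_eq0 -lt0n fact_gt0.
Qed.

End Frobenius.

Theorem mainTheorem7 (K : numFieldType) (A B : comAlgType K)
    (phi : {linear A -> B}) (n : nat) :
  (1 <= n)%N -> frobenius_hom phi n ->
  forall a b : A, psi phi n (a * b) = psi phi n a * psi phi n b.
Proof.
case: n => [//|m] _ [phi1 Phi_vanish] a b.
by apply: psi_mul => // x; apply: Phi_vanish.
Qed.
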